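(* Let $(X,\mathcal{A})$ be a measurable space, $f,g:X\to[0,1]$ two comonotone measurable functions, and $S$ a continuous t-conorm. Then for every monotone measure $m$ on $(X,\mathcal{A})$ with $m(X)=1$, \[ \mathbf{I}_S\big(m,S(f,g)\big)\ \le\ S\big(\mathbf{I}_S(m,f),\mathbf{I}_S(m,g)\big), \] where $S(f,g)(x)=S(f(x),g(x))$ for $x\in X$.
   Context: A monotone measure on $(X,\mathcal{A})$ is $m:\mathcal{A}\to[0,\infty]$ with $m(\emptyset)=0$, $m(X)>0$, $m(A)\le m(B)$ for $A\subseteq B$. A t-conorm is an associative, commutative map $S:[0,1]^2\to[0,1]$, non-decreasing in both components, with neutral element $0$. The semiconormed integral is $\mathbf{I}_S(m,f)=\inf\{S(t,m(\{f>t\})) : t\in(0,1]\}$. $f,g$ are comonotone if $(f(x)-f(y))(g(x)-g(y))\ge0$ for all $x,y\in X$. *)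

From HB Require Import structures.
From mathcomp Require Import all_boot all_order all_algebra.
From mathcomp Require Import all_classical all_reals all_analysis.
Set Implicit Arguments. Unset Strict Implicit. Unset Printing Implicit Defensive.
Import Order.TTheory GRing.Theory Num.Theory.
Import numFieldNormedType.Exports.
Local Open Scope classical_set_scope.
Local Open Scope ring_scope.

Definition unit01 {R : realType} : set R := `[0, 1]%classic.

(* t-conorm: a binary operation on [0,1] (represented as a function R -> R -> R,
   only its values on [0,1]^2 matter) *)
Definition is_tconorm {R : realType} (S : R -> R -> R) : Prop :=
  [/\ (forall x y, x \in `[0, 1] -> y \in `[0, 1] -> S x y \in `[(0:R), 1]),
      (forall x y z, x \in `[0, 1] -> y \in `[0, 1] -> z \in `[0, 1] ->
         S x (S y z) = S (S x y) z),
      (forall x y, x \in `[0, 1] -> y \in `[0, 1] -> S x y = S y x),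
      (forall x1 x2 y1 y2, x1 \in `[0, 1] -> x2 \in `[0, 1] ->
         y1 \in `[0, 1] -> y2 \in `[0, 1] ->
         x1 <= x2 -> y1 <= y2 -> S x1 y1 <= S x2 y2) &
      (forall x, x \in `[0, 1] -> S x 0 = x)].

Definition tconorm_continuous {R : realType} (S : R -> R -> R) : Prop :=
  {within [set p : R * R | p.1 \in `[(0:R), 1] /\ p.2 \in `[(0:R), 1]],
     continuous (fun p : R * R => S p.1 p.2)}.

Definition monotone_measure {d : measure_display} {T : measurableType d}
  {R : realType} (m : set T -> \bar R) : Prop :=
  [/\ (forall A, measurable A -> (0 <= m A)%E),
      m set0 = 0%E,
      (0 < m setT)%E &
      (forall A B, measurable A -> measurable B -> A `<=` B -> (m A <= m B)%E)].

Definition comonotone {T : Type} {R : realType} (f g : T -> R) : Prop :=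
  forall x y, 0 <= (f x - f y) * (g x - g y).

(* semiconormed integral I_S(m,f) = inf_{t in (0,1]} S(t, m{f > t});
   used for normalized m (m setT = 1), so m's values on measurable sets are
   finite and lie in [0,1]; `fine` converts them to reals. *)
Definition semiconormed_integral {d : measure_display} {T : measurableType d}
  {R : realType} (S : R -> R -> R) (m : set T -> \bar R) (f : T -> R) : R :=
  inf [set S t (fine (m [set x | t < f x])) | t in `]0, 1]%classic].

From HB Require Import structures.
From mathcomp Require Import all_boot all_order all_algebra.
From mathcomp Require Import all_classical all_reals all_analysis.
Import Order.TTheory GRing.Theory Num.Theory.
Import numFieldNormedType.Exports.
Local Open Scope classical_set_scope.
Local Open Scope ring_scope.

(* For s, u in ]0, 1], comonotonicity nests the level sets {f > s} and {g > u};
   the level set {S(f, g) > S(s, u)} lies in their union, so its measure is at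
   most S(m{f > s}, m{g > u}). Associativity and commutativity of S then bound
   I_S(m, S(f, g)) by S(S(s, m{f > s}), S(u, m{g > u})), and continuity of S
   carries the bound to the infima over s and u. The level sets of S(f, g) are
   measurable because they are upper sets of the comonotone pair (f, g). *)

Section TConorm.
Set Implicit Arguments.
Unset Strict Implicit.
Variables (R : realType) (S : R -> R -> R).
Hypothesis hS : is_tconorm S.

Lemma tconorm_in01 (x y : R) : x \in `[0, 1] -> y \in `[0, 1] -> S x y \in `[0, 1].
Proof. by have [+ _ _ _ _] := hS; apply. Qed.

Lemma tconorm_le (x1 x2 y1 y2 : R) : x1 \in `[0, 1] -> x2 \in `[0, 1] ->
  y1 \in `[0, 1] -> y2 \in `[0, 1] -> x1 <= x2 -> y1 <= y2 -> S x1 y1 <= S x2 y2.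
Proof. by have [_ _ _ + _] := hS; apply. Qed.

Lemma tconormC (x y : R) : x \in `[0, 1] -> y \in `[0, 1] -> S x y = S y x.
Proof. by have [_ _ + _ _] := hS; apply. Qed.

Lemma tconorm_gel (x y : R) : x \in `[0, 1] -> y \in `[0, 1] -> x <= S x y.
Proof.
have [_ _ _ _ S0] := hS; move=> x01 y01.
have z01 : (0 : R) \in `[0, 1] by rewrite in_itv /= lexx ler01.
rewrite -{1}(S0 x x01) tconorm_le //.
by move: y01; rewrite in_itv /= => /andP[].
Qed.

Lemma tconorm_ger (x y : R) : x \in `[0, 1] -> y \in `[0, 1] -> y <= S x y.
Proof. by move=> x01 y01; rewrite tconormC // tconorm_gel. Qed.

Lemma tconormACA (a b c e : R) : a \in `[0, 1] -> b \in `[0, 1] ->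
  c \in `[0, 1] -> e \in `[0, 1] -> S (S a b) (S c e) = S (S a c) (S b e).
Proof.
have [S01 SA SC _ _] := hS; move=> a01 b01 c01 e01.
by rewrite -SA ?S01 // (SA b) // (SC b c) // -(SA c) ?S01 // SA ?S01.
Qed.

End TConorm.

Section Comonotone.
Set Implicit Arguments.
Unset Strict Implicit.
Variables (T : Type) (R : realType) (f g : T -> R).
Hypothesis fg_comono : comonotone f g.

Lemma comonotoneC : comonotone g f.
Proof. by move=> x y; rewrite mulrC. Qed.

Lemma comonotone_lt_le x y : f y < f x -> g y <= g x.
Proof.
move=> fyx; rewrite leNgt; apply/negP => gxy.
have := fg_comono x y; rewrite leNgt => /negP; apply.
by rewrite pmulr_rlt0 ?subr_gt0 ?subr_lt0.
Qed.

Lemma comonotone_level_nested (s u : R) :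
  [set x | s < f x] `<=` [set x | u < g x] \/ [set x | u < g x] `<=` [set x | s < f x].
Proof.
have [|/existsNP[y /not_implyP[/= uy /negP]]] :=
  pselect ([set x | u < g x] `<=` [set x | s < f x]); first by right.
rewrite -leNgt => fys; left => x /= sx.
exact: lt_le_trans uy (comonotone_lt_le (le_lt_trans fys sx)).
Qed.

End Comonotone.

Section MeasurableLevels.
Set Implicit Arguments.
Unset Strict Implicit.
Variables (d : measure_display) (T : measurableType d) (R : realType).

Lemma measurable_funT_ltr (h : T -> R) (t : R) :
  measurable_fun setT h -> measurable [set x | t < h x].
Proof.
move=> mh; rewrite -preimage_itvoy -[_ @^-1` _]setTI.
exact: mh measurableT _ (measurable_itv _).
Qed.

Lemma measurable_funT_eqr (h : T -> R) (t : R) :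
  measurable_fun setT h -> measurable [set x | h x = t].
Proof.
by move=> mh; rewrite -[[set x | _]]setTI; exact: mh measurableT _ (measurable_set1 t).
Qed.

Variables (f g : T -> R).
Hypotheses (fg_comono : comonotone f g)
  (mf : measurable_fun setT f) (mg : measurable_fun setT g)
  (f_lb : has_lbound (range f)) (g_lb : has_lbound (range g)).

(* An upper set of the comonotone pair is the union of two strict level sets,
   possibly together with the fiber over the pair of infima. *)
Lemma measurable_comonotone_upper (P : set T) :
  (forall x y, P y -> f y <= f x -> g y <= g x -> P x) -> measurable P.
Proof.
move=> P_up; have [->|/set0P[x0 Px0]] := eqVneq P set0; first exact: measurable0.
set al := inf (f @` P); set be := inf (g @` P).
have fP_lb : has_lbound (f @` P).
  by apply: subset_has_lbound f_lb => _ [x _ <-]; exists x.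
have gP_lb : has_lbound (g @` P).
  by apply: subset_has_lbound g_lb => _ [x _ <-]; exists x.
have up_f : [set x | al < f x] `<=` P.
  move=> x /= /inf_lt[]; first by exists (f x0), x0.
  move=> _ [y Py <-] fyx.
  exact: P_up _ _ Py (ltW fyx) (comonotone_lt_le fg_comono fyx).
have up_g : [set x | be < g x] `<=` P.
  move=> x /= /inf_lt[]; first by exists (g x0), x0.
  move=> _ [y Py <-] gyx.
  exact: P_up _ _ Py (comonotone_lt_le (comonotoneC fg_comono) gyx) (ltW gyx).
set C := [set x | f x = al] `&` [set x | g x = be].
have -> : P = [set x | al < f x] `|` [set x | be < g x] `|` (P `&` C).
  apply/seteqP; split => [x Px|x [[/up_f|/up_g]|[]]] //.
  have := ge_inf gP_lb (ex_intro2 _ _ x Px erefl).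
  rewrite le_eqVlt => /predU1P[gx|]; last by left; right.
  have := ge_inf fP_lb (ex_intro2 _ _ x Px erefl).
  rewrite le_eqVlt => /predU1P[fx|]; last by left; left.
  by right; split.
apply: measurableU; first by apply: measurableU; exact: measurable_funT_ltr.
have [->|/set0P[x1 [Px1 [fx1 gx1]]]] := eqVneq (P `&` C) set0; first exact: measurable0.
suff -> : P `&` C = C by apply: measurableI; exact: measurable_funT_eqr.
apply/seteqP; split => [x []//|x [/= fx gx]]; split => //.
by apply: P_up _ _ Px1 _ _; rewrite ?fx ?fx1 ?gx ?gx1.
Qed.

End MeasurableLevels.

Lemma measurable_tconorm_level (d : measure_display) (T : measurableType d)
    (R : realType) (S : R -> R -> R) (f g : T -> R) (t : R) :
  is_tconorm S -> (forall x, f x \in `[0, 1]) -> (forall x, g x \in `[0, 1]) ->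
  comonotone f g -> measurable_fun setT f -> measurable_fun setT g ->
  measurable [set x | t < S (f x) (g x)].
Proof.
move=> hS f01 g01 fg_comono mf mg.
have range_lb (h : T -> R) : (forall x, h x \in `[0, 1]) -> has_lbound (range h).
  by move=> h01; exists 0 => _ [x _ <-]; move: (h01 x); rewrite in_itv /= => /andP[].
apply: (measurable_comonotone_upper fg_comono mf mg (range_lb f f01) (range_lb g g01)).
by move=> x y /= /lt_le_trans + fyx gyx; apply; apply: tconorm_le.
Qed.

Section NormalizedMeasure.
Set Implicit Arguments.
Unset Strict Implicit.
Variables (d : measure_display) (T : measurableType d) (R : realType).
Variable m : set T -> \bar R.
Hypotheses (hm : monotone_measure m) (m1 : m setT = 1%E).

Lemma normalized_measure_le1 A : measurable A -> (m A <= 1)%E.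
Proof. by have [_ _ _ m_mono] := hm; rewrite -m1 => mA; apply: m_mono. Qed.

Lemma normalized_measure_fineK A : measurable A -> (fine (m A))%:E = m A.
Proof.
have [m_ge0 _ _ _] := hm; move=> mA; apply: fineK.
by rewrite ge0_fin_numE ?m_ge0 // (le_lt_trans (normalized_measure_le1 mA)) ?ltey.
Qed.

Lemma normalized_measure_fine01 A : measurable A -> fine (m A) \in `[0, 1].
Proof.
have [m_ge0 _ _ _] := hm; move=> mA.
by rewrite in_itv /= -!lee_fin normalized_measure_fineK // m_ge0 // normalized_measure_le1.
Qed.

Lemma le_normalized_measure_fine A B : measurable A -> measurable B ->
  A `<=` B -> fine (m A) <= fine (m B).
Proof.
have [_ _ _ m_mono] := hm; move=> mA mB AB.
by rewrite -lee_fin !normalized_measure_fineK // m_mono.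
Qed.

End NormalizedMeasure.

Section ComonotoneTConormMeasure.
Set Implicit Arguments.
Unset Strict Implicit.
Variables (d : measure_display) (T : measurableType d) (R : realType).
Variables (S : R -> R -> R) (m : set T -> \bar R) (f g : T -> R).
Hypotheses (hS : is_tconorm S) (hm : monotone_measure m) (m1 : m setT = 1%E).
Hypotheses (f01 : forall x, f x \in `[0, 1]) (g01 : forall x, g x \in `[0, 1]).
Hypotheses (fg_comono : comonotone f g).
Hypotheses (mf : measurable_fun setT f) (mg : measurable_fun setT g).

(* The level sets of comonotone functions are nested, so [m] only has to be
   compared with the larger of the two, which [S] dominates. *)
Lemma measure_tconorm_level_le (s u : R) : s \in `[0, 1] -> u \in `[0, 1] ->
  fine (m [set x | S s u < S (f x) (g x)])
    <= S (fine (m [set x | s < f x])) (fine (m [set x | u < g x])).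
Proof.
move=> s01 u01.
have mfs := measurable_funT_ltr s mf; have mgu := measurable_funT_ltr u mg.
have mfg := measurable_tconorm_level (S s u) hS f01 g01 fg_comono mf mg.
have ms01 := normalized_measure_fine01 hm m1 mfs.
have mu01 := normalized_measure_fine01 hm m1 mgu.
have level_sub : [set x | S s u < S (f x) (g x)] `<=`
    [set x | s < f x] `|` [set x | u < g x].
  move=> x /=; rewrite ltNge; apply: contraNP => /not_orP[].
  move=> /negP; rewrite -leNgt => fxs /negP; rewrite -leNgt => gxu.
  exact: tconorm_le.
have [fg_nest|gf_nest] := comonotone_level_nested fg_comono s u.
- apply: le_trans (tconorm_ger hS ms01 mu01).
  apply: le_normalized_measure_fine => // x /level_sub[/fg_nest|] //.
- apply: le_trans (tconorm_gel hS ms01 mu01).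
  apply: le_normalized_measure_fine => // x /level_sub[|/gf_nest] //.
Qed.

End ComonotoneTConormMeasure.

Definition semiconormed_values (d : measure_display) (T : measurableType d)
    (R : realType) (S : R -> R -> R) (m : set T -> \bar R) (h : T -> R) : set R :=
  [set S t (fine (m [set x | t < h x])) | t in `]0, 1]%classic].

Lemma semiconormed_integralE (d : measure_display) (T : measurableType d)
    (R : realType) (S : R -> R -> R) (m : set T -> \bar R) (h : T -> R) :
  semiconormed_integral S m h = inf (semiconormed_values S m h).
Proof. by []. Qed.

Section SemiconormedValues.
Set Implicit Arguments.
Unset Strict Implicit.
Variables (d : measure_display) (T : measurableType d) (R : realType).
Variables (S : R -> R -> R) (m : set T -> \bar R) (h : T -> R).
Hypotheses (hS : is_tconorm S) (hm : monotone_measure m) (m1 : m setT = 1%E).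
Hypothesis mh : forall t, measurable [set x | t < h x].

Lemma semiconormed_values_neq0 : semiconormed_values S m h !=set0.
Proof.
by exists (S 1 (fine (m [set x | 1 < h x]))), 1; rewrite //= in_itv /= ltr01 lexx.
Qed.

Lemma semiconormed_values_sub01 : semiconormed_values S m h `<=` `[0, 1]%classic.
Proof.
move=> y [t]; rewrite /= in_itv /= => /andP[t_gt0 t_le1] <-.
apply: tconorm_in01 (normalized_measure_fine01 hm m1 (mh t)) => //.
by rewrite in_itv /= ltW.
Qed.

Lemma semiconormed_integral_le (t : R) : 0 < t -> t <= 1 ->
  semiconormed_integral S m h <= S t (fine (m [set x | t < h x])).
Proof.
move=> t_gt0 t_le1; apply: ge_inf; last by exists t; rewrite //= in_itv /= t_gt0.
by exists 0 => y /semiconormed_values_sub01; rewrite /= in_itv /= => /andP[].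
Qed.

End SemiconormedValues.

Lemma le_continuous_inf (R : realType) (F : R -> R -> R) (E1 E2 : set R) c :
  tconorm_continuous F ->
  E1 !=set0 -> E1 `<=` `[0, 1]%classic -> E2 !=set0 -> E2 `<=` `[0, 1]%classic ->
  (forall x y, E1 x -> E2 y -> c <= F x y) -> c <= F (inf E1) (inf E2).
Proof.
move=> F_cont E1_neq0 E1_01 E2_neq0 E2_01 c_le.
have inf_has (E : set R) : E !=set0 -> E `<=` `[0, 1]%classic -> has_inf E.
  move=> E0 E01; split => //; exists 0 => x /E01.
  by rewrite /= in_itv /= => /andP[].
have inf01 (E : set R) : E !=set0 -> E `<=` `[0, 1]%classic -> inf E \in `[0, 1].
  move=> E0 E01; have [x Ex] := E0.
  rewrite in_itv /= lb_le_inf //=; last by move=> y /E01; rewrite /= in_itv /= => /andP[].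
  apply: le_trans (ge_inf (inf_has E E0 E01).2 Ex) _.
  by move: (E01 x Ex); rewrite /= in_itv /= => /andP[].
rewrite leNgt; apply/negP => Finf_lt.
set A := [set p : R * R | p.1 \in `[0, 1] /\ p.2 \in `[0, 1]].
have A_inf : A (inf E1, inf E2) by split; [exact: inf01|exact: inf01].
have /(cvgr_lt _)/(_ _ Finf_lt) :=
  (@subspace_continuousP _ A _ (fun p : R * R => F p.1 p.2)).1 F_cont _ A_inf.
move=> /nbhs_ballP[e /= e_gt0 near_lt].
have [x E1x x_lt] := inf_adherent e_gt0 (inf_has _ E1_neq0 E1_01).
have [y E2y y_lt] := inf_adherent e_gt0 (inf_has _ E2_neq0 E2_01).
have := c_le x y E1x E2y; rewrite leNgt => /negP; apply.
apply: (near_lt (x, y)); last by split; [exact: E1_01|exact: E2_01].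
split; rewrite -ball_normE /ball_ /= ltr_distlC; apply/andP; split => //.
- by apply: lt_le_trans (ge_inf (inf_has _ E1_neq0 E1_01).2 E1x); rewrite ltrBlDr ltrDl.
- by apply: lt_le_trans (ge_inf (inf_has _ E2_neq0 E2_01).2 E2y); rewrite ltrBlDr ltrDl.
Qed.

Theorem corollary4p10 (d : measure_display) (T : measurableType d)
  (R : realType) (f g : T -> R) (S : R -> R -> R)
  (hf01 : forall x, f x \in `[(0:R), 1]) (hg01 : forall x, g x \in `[(0:R), 1])
  (hfm : measurable_fun setT f) (hgm : measurable_fun setT g)
  (hcom : comonotone f g)
  (hS : is_tconorm S) (hSc : tconorm_continuous S)
  (m : set T -> \bar R) (hm : monotone_measure m) (hm1 : m setT = 1%E) :
  semiconormed_integral S m (fun x => S (f x) (g x))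
  <= S (semiconormed_integral S m f) (semiconormed_integral S m g).
Proof.
have mf t := measurable_funT_ltr t hfm; have mg t := measurable_funT_ltr t hgm.
rewrite !(semiconormed_integralE S m f, semiconormed_integralE S m g).
apply: le_continuous_inf => //;
  try exact: semiconormed_values_neq0; try exact: semiconormed_values_sub01.
move=> _ _ [s /= /[!in_itv] /andP[s_gt0 s_le1] <-] [u /= /[!in_itv] /andP[u_gt0 u_le1] <-].
have s01 : s \in `[0, 1] by rewrite in_itv /= ltW.
have u01 : u \in `[0, 1] by rewrite in_itv /= ltW.
have su01 := tconorm_in01 hS s01 u01.
have ms01 := normalized_measure_fine01 hm hm1 (mf s).
have mu01 := normalized_measure_fine01 hm hm1 (mg u).
rewrite tconormACA //.
have su_gt0 : 0 < S s u := lt_le_trans s_gt0 (tconorm_gel hS s01 u01).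
have su_le1 : S s u <= 1 by move: su01; rewrite in_itv /= => /andP[].
have mfg t := measurable_tconorm_level t hS hf01 hg01 hcom hfm hgm.
apply: le_trans (semiconormed_integral_le hS hm hm1 mfg su_gt0 su_le1) _.
apply: tconorm_le => //.
- exact (normalized_measure_fine01 hm hm1 (mfg (S s u))).
- exact: tconorm_in01.
- exact (measure_tconorm_level_le hS hm hm1 hf01 hg01 hcom hfm hgm s01 u01).
Qed.
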